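(* Let $n\ge 3$ and let $K_n$ be the complete graph on $n$ vertices, equipped with a weak IASI in which a vertex $v$ is not mono-indexed. Then the sparing number $\varphi(K_n)$ equals the number of triangles of $K_n$ that contain $v$.
   Context: Let $\mathbb{N}_0$ be the set of non-negative integers and $\mathcal{P}(\mathbb{N}_0)$ its power set; for $A,B\subseteq\mathbb{N}_0$, $A+B=\{a+b: a\in A, b\in B\}$. All graphs are simple, finite, without isolated vertices. An integer additive set-indexer (IASI) of a graph $G$ is an injective map $f:V(G)\to\mathcal{P}(\mathbb{N}_0)$ such that the induced map $f^+:E(G)\to\mathcal{P}(\mathbb{N}_0)$, $f^+(uv)=f(u)+f(v)$, is also injective. A weak IASI is an IASI $f$ with $|f^+(uv)|=\max(|f(u)|,|f(v)|)$ for every edge $uv$. A vertex $v$ (resp. edge $e$) is mono-indexed if $|f(v)|=1$ (resp. $|f^+(e)|=1$). The sparing number $\varphi(G)$ of a graph $G$ admitting a weak IASI is the minimum number of mono-indexed edges over all weak IASIs of $G$. *)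

From mathcomp Require Import all_boot.
From mathcomp Require Import finmap.
Set Implicit Arguments.
Unset Strict Implicit.
Unset Printing Implicit Defensive.
Local Open Scope fset_scope.

Definition sumset (A B : {fset nat}) : {fset nat} :=
  [fset (a + b)%N | a in A, b in B].

Section Graphs.
Variable V : finType.

Definition simple_graph (g : rel V) : Prop :=
  (forall u, ~~ g u u) /\ (forall u v, g u v = g v u).

Definition no_isolated (g : rel V) : Prop := forall u, exists v, g u v.

Definition complete_rel : rel V := fun u v => u != v.

Definition edges (g : rel V) : {set {set V}} :=
  [set e : {set V} | [exists u, exists v, g u v && (e == [set u; v])]].

Definition is_IASI (g : rel V) (f : V -> {fset nat}) : Prop :=
  injective f /\
  forall u v u' v', g u v -> g u' v' ->
    sumset (f u) (f v) = sumset (f u') (f v') -> [set u; v] = [set u'; v'].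

Definition is_weak_IASI (g : rel V) (f : V -> {fset nat}) : Prop :=
  is_IASI g f /\
  forall u v, g u v -> #|` sumset (f u) (f v)| = maxn #|` f u| #|` f v|.

Definition mono_vertex (f : V -> {fset nat}) (v : V) : bool := #|` f v| == 1.

Definition mono_edge (f : V -> {fset nat}) (e : {set V}) : bool :=
  [exists u, exists v, (e == [set u; v]) && (#|` sumset (f u) (f v)| == 1)].

Definition num_mono_edges (g : rel V) (f : V -> {fset nat}) : nat :=
  #|[set e in edges g | mono_edge f e]|.

Definition is_sparing_number (g : rel V) (k : nat) : Prop :=
  (exists f, is_weak_IASI g f /\ num_mono_edges g f = k) /\
  (forall f, is_weak_IASI g f -> k <= num_mono_edges g f).

Definition triangles (g : rel V) : {set {set V}} :=
  [set t : {set V} | (#|t| == 3) && [forall u in t, forall w in t, (u != w) ==> g u w]].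

Definition triangles_at (g : rel V) (v : V) : {set {set V}} :=
  [set t in triangles g | v \in t].

End Graphs.

(** In a weak IASI of a complete graph with at least three vertices every
    label is nonempty (an empty label would force all labels to be empty,
    against injectivity), and two labels of size at least two can never be
    adjacent, because then [|A + B| > max(|A|, |B|)].  Hence at most one
    vertex is not mono-indexed.  An edge is mono-indexed exactly when both
    its ends are, so a weak IASI with [m] mono-indexed vertices has
    [C(m, 2)] mono-indexed edges; [m >= n - 1], with equality as soon as
    some vertex [v] is not mono-indexed, and [C(n - 1, 2)] is the number of
    triangles through [v]. *)

From mathcomp Require Import all_boot finmap zify.
Local Open Scope fset_scope.

Lemma sumsetP (A B : {fset nat}) x :
  reflect (exists a b, [/\ a \in A, b \in B & x = (a + b)%N])
          (x \in sumset A B).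
Proof.
apply: (iffP (imfset2P _ _ _ _ _)) => [[a Aa [b Bb ->]]|[a [b [Aa Bb ->]]]].
  by exists a, b.
by exists a => //; exists b.
Qed.

Lemma sumsetC (A B : {fset nat}) : sumset A B = sumset B A.
Proof.
by apply/fsetP=> x; apply/sumsetP/sumsetP=> -[a [b [Aa Bb ->]]];
  exists b, a; rewrite addnC.
Qed.

Lemma sumset0 (B : {fset nat}) : sumset fset0 B = fset0.
Proof. by apply/fsetP=> x; rewrite in_fset0; apply/sumsetP=> -[a [b []]]. Qed.

Lemma fset_nat_max (A : {fset nat}) :
  A != fset0 -> exists2 M, M \in A & {in A, forall a, a <= M}.
Proof.
case/fset0Pn=> x0 Ax0.
case: (@arg_maxnP A [` Ax0] xpredT val isT) => M _ maxM.
by exists (val M) => [|a Aa]; [exact: valP | exact: (maxM [` Aa])].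
Qed.

Lemma fset_nat_gt1 (B : {fset nat}) :
  1 < #|` B| -> exists b1 b2, [/\ b1 \in B, b2 \in B & b1 < b2].
Proof.
rewrite cardfE => /card_gt1P[x [y [_ _]]]; rewrite -val_eqE => xy.
have [lt|lt|eq] := ltngtP (val x) (val y); last by rewrite eq eqxx in xy.
- by exists (val x), (val y); rewrite !fsvalP.
- by exists (val y), (val x); rewrite !fsvalP.
Qed.

(* [A + b1] has [|A|] elements and misses [max A + b2] for [b1 < b2]. *)
Lemma card_sumset_gtl {A B : {fset nat}} :
  A != fset0 -> 1 < #|` B| -> #|` A| < #|` sumset A B|.
Proof.
move=> /fset_nat_max[M AM maxM] /fset_nat_gt1[b1 [b2 [Bb1 Bb2 lt_b]]].
pose C := [fset (a + b1)%N | a in A].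
have cardC : #|` C| = #|` A| by rewrite card_imfset //= => ? ?; apply: addIn.
have notinC : (M + b2)%N \notin C.
  apply/imfsetP=> -[a /= Aa eqMa].
  by have := maxM a Aa; rewrite leqNgt -(ltn_add2r b1) -eqMa ltn_add2l lt_b.
have subC : (M + b2)%N |` C `<=` sumset A B.
  apply/fsubsetP=> y; rewrite in_fset1U => /orP[/eqP->|/imfsetP[a /= Aa ->]].
    by apply/sumsetP; exists M, b2.
  by apply/sumsetP; exists a, b1.
by have := fsubset_leq_card subC; rewrite cardfsU1 notinC cardC.
Qed.

Lemma edges_complete (T : finType) :
  edges (@complete_rel T) = [set e : {set T} | #|e| == 2].
Proof.
apply/setP=> e; rewrite !inE; apply/existsP/cards2P.
  by case=> u /existsP[w /andP[uw /eqP->]]; exists u, w.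
by case=> u [w [uw ->]]; exists u; apply/existsP; exists w;
  rewrite /complete_rel uw eqxx.
Qed.

Lemma triangles_complete (T : finType) :
  triangles (@complete_rel T) = [set t : {set T} | #|t| == 3].
Proof.
apply/setP=> t; rewrite !inE andb_idr // => _.
by apply/forall_inP=> u _; apply/forall_inP=> w _; apply/implyP.
Qed.

(* Adding [v] is a bijection from the pairs avoiding [v] onto the triangles
   through [v]. *)
Lemma card_triangles_at_complete (T : finType) (v : T) :
  #|triangles_at (@complete_rel T) v| = 'C(#|T|.-1, 2).
Proof.
pose D := [set e : {set T} | e \subset [set~ v] & #|e| == 2].
have notin_D e : e \in D -> v \notin e.
  by rewrite inE => /andP[/subsetP sub _]; apply/negP=> /sub; rewrite !inE eqxx.
have -> : triangles_at (@complete_rel T) v = (fun e => v |: e) @: D.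
  rewrite /triangles_at triangles_complete; apply/setP=> t; rewrite !inE.
  apply/andP/imsetP=> [[/eqP t3 vt]|[e De ->]].
    exists (t :\ v); last by rewrite setD1K.
    rewrite inE subsetDr /=.
    by apply/eqP; move: (cardsD1 v t); rewrite vt t3; lia.
  move: (De); rewrite inE => /andP[_ /eqP e2].
  by rewrite cardsU1 notin_D // e2 setU11.
rewrite card_in_imset ?cards_draws ?cardsC1 // => e1 e2 De1 De2 eq12.
by rewrite -(setU1K (notin_D _ De1)) -(setU1K (notin_D _ De2)) eq12.
Qed.

Definition mono_vertices {T : finType} (f : T -> {fset nat}) :=
  [set u | mono_vertex f u].

Section WeakIASIComplete.
Context {T : finType} {f : T -> {fset nat}}.
Hypotheses (hf : is_weak_IASI (@complete_rel T) f) (hT : 2 < #|T|).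

Let card_sumset {u w : T} :
  u != w -> #|` sumset (f u) (f w)| = maxn #|` f u| #|` f w|.
Proof. by case: hf => _; apply. Qed.

Lemma weak_IASI_neq0 u : f u != fset0.
Proof.
have [[f_inj _] _] := hf.
apply/eqP=> fu0.
have others0 w : w != u -> f w = fset0.
  move=> wu; apply: cardfs0_eq.
  by have := card_sumset wu; rewrite sumsetC fu0 sumset0 cardfs0 maxn0.
have : 1 < #|[set~ u]| by rewrite cardsC1; lia.
case/card_gt1P=> w1 [w2 [+ + w12]]; rewrite !inE => w1u w2u.
by move: w12; rewrite (f_inj w1 w2) ?eqxx // !others0.
Qed.

Lemma nonmono_card_gt1 {u} : ~~ mono_vertex f u -> 1 < #|` f u|.
Proof.
rewrite /mono_vertex; have := weak_IASI_neq0 u.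
by rewrite -cardfs_gt0; lia.
Qed.

Lemma mono_vertex_neq {u w} :
  u != w -> ~~ mono_vertex f u -> mono_vertex f w.
Proof.
move=> uw nu; apply: contraT => nw.
have lt_u := card_sumset_gtl (weak_IASI_neq0 u) (nonmono_card_gt1 nw).
have lt_w := card_sumset_gtl (weak_IASI_neq0 w) (nonmono_card_gt1 nu).
by rewrite sumsetC in lt_w; move: lt_u lt_w; rewrite card_sumset //; lia.
Qed.

Lemma mono_vertices_setC1 {v} :
  ~~ mono_vertex f v -> mono_vertices f = [set~ v].
Proof.
move=> nv; apply/setP=> u; rewrite !inE.
have [->|uv] := eqVneq u v; first by rewrite (negbTE nv).
by rewrite (mono_vertex_neq _ nv) ?uv // eq_sym.
Qed.

Lemma card_mono_vertices : #|T|.-1 <= #|mono_vertices f|.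
Proof.
case: (pickP [pred u | ~~ mono_vertex f u]) => [v /= nv|all_mono].
  by rewrite (mono_vertices_setC1 nv) cardsC1.
suff -> : mono_vertices f = setT by rewrite cardsT leq_pred.
by apply/setP=> u; rewrite !inE; move/negbFE: (all_mono u).
Qed.

(* By weak additivity [|f u + f w| = 1] means [max(|f u|, |f w|) = 1]. *)
Lemma mono_sumset u w : u != w ->
  (#|` sumset (f u) (f w)| == 1) = mono_vertex f u && mono_vertex f w.
Proof.
move=> uw; rewrite card_sumset // /mono_vertex.
by move: (weak_IASI_neq0 u) (weak_IASI_neq0 w); rewrite -!cardfs_gt0; lia.
Qed.

Lemma mono_edge_complete (e : {set T}) :
  #|e| == 2 -> mono_edge f e = (e \subset mono_vertices f).
Proof.
move=> e2; apply/existsP/idP => [[u /existsP[w /andP[/eqP def_e]]]|sub].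
  have uw : u != w.
    by apply: contraTneq e2 => eq_uw; rewrite def_e eq_uw setUid cards1.
  by rewrite mono_sumset // def_e subUset !sub1set !inE.
case/cards2P: e2 sub => u [w [uw ->]]; rewrite subUset !sub1set !inE => mono_uw.
by exists u; apply/existsP; exists w; rewrite eqxx mono_sumset.
Qed.

Lemma num_mono_edges_complete :
  num_mono_edges (@complete_rel T) f = 'C(#|mono_vertices f|, 2).
Proof.
rewrite /num_mono_edges edges_complete -cards_draws.
apply: eq_card => e; rewrite !inE andbC.
have [e2|_] := boolP (#|e| == 2); last by rewrite !andbF.
by rewrite !andbT mono_edge_complete.
Qed.

End WeakIASIComplete.

Theorem proposition2p1 (n : nat) (hn : 3 <= n)
    (f : 'I_n -> {fset nat}) (v : 'I_n)
    (hf : is_weak_IASI (@complete_rel 'I_n) f)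
    (hv : ~~ mono_vertex f v) :
  is_sparing_number (@complete_rel 'I_n)
    #|triangles_at (@complete_rel 'I_n) v|.
Proof.
have hT : 2 < #|'I_n| by rewrite card_ord.
rewrite card_triangles_at_complete; split.
  exists f; rewrite num_mono_edges_complete //.
  by rewrite (mono_vertices_setC1 hf hT hv) cardsC1.
move=> g hg; rewrite num_mono_edges_complete //.
exact/leq_bin2l/card_mono_vertices.
Qed.
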